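(* For every natural number $m>2$, $\mathrm{Log}_{=1}(\mathbb{R}^m)\not\subseteq\mathrm{Log}_{=1}(\mathbb{R}^2)$.
   Context: Modal formulas are built from a countable set of propositional variables using $\bot$, $\to$ and one unary modality $\lozenge$. A frame is a pair $(X,R)$; a valuation assigns subsets of $X$ to variables; $x\models\lozenge\varphi$ iff there is $y$ with $xRy$ and $y\models\varphi$. A formula is valid in a frame if true at every point under every valuation. For a metric space $(X,d)$, $\mathrm{Log}_{=1}(X)$ is the set of modal formulas valid in the frame $(X,R_{=1})$, where $xR_{=1}y$ iff $d(x,y)=1$. $\mathbb{R}^n$ carries the Euclidean metric. *)

From HB Require Import structures.
From mathcomp Require Import all_boot all_order all_algebra.
From mathcomp Require Import Rstruct.
Set Implicit Arguments. Unset Strict Implicit. Unset Printing Implicit Defensive.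
Import Order.TTheory GRing.Theory Num.Theory.
Local Open Scope ring_scope.

Inductive mformula : Type :=
| MVar : nat -> mformula
| MBot : mformula
| MImp : mformula -> mformula -> mformula
| MDia : mformula -> mformula.

Fixpoint msat (X : Type) (Rel : X -> X -> Prop) (V : nat -> X -> Prop)
  (x : X) (phi : mformula) : Prop :=
  match phi with
  | MVar p => V p x
  | MBot => False
  | MImp a b => msat Rel V x a -> msat Rel V x b
  | MDia a => exists y, Rel x y /\ msat Rel V y a
  end.

Definition mvalid (X : Type) (Rel : X -> X -> Prop) (phi : mformula) : Prop :=
  forall (V : nat -> X -> Prop) (x : X), msat Rel V x phi.

Definition Rn (n : nat) := 'rV[Rdefinitions.R]_n.

Definition euclid_dist (n : nat) (x y : Rn n) : Rdefinitions.R :=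
  Num.sqrt (\sum_(i < n) (x ord0 i - y ord0 i) ^+ 2).

Definition unit_dist_rel (n : nat) (x y : Rn n) : Prop := euclid_dist x y = 1.

Definition Log_eq1 (n : nat) (phi : mformula) : Prop :=
  mvalid (@unit_dist_rel n) phi.

(* Let p hold exactly at x and q exactly at y, where x R y.  Then
   p -> [](q -> <>(near_pq /\ <>near_pq)), with near_pq = <>p /\ <>q, holds at x
   iff some z adjacent to y has a neighbour w such that z and w are both adjacent
   to x and y: the edge xy lies in a K4 of the frame.  In R^m with m >= 3 every
   unit segment lies in a regular unit tetrahedron, while in the plane the two
   points at unit distance from both ends of a unit segment are sqrt 3 apart. *)

From mathcomp Require Import all_boot.
From mathcomp Require Import all_order all_algebra Rstruct ring lra.
Import Order.TTheory GRing.Theory Num.Theory.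
Local Open Scope ring_scope.
Set Implicit Arguments. Unset Strict Implicit.

Notation RR := Rdefinitions.R.

Definition mNeg (a : mformula) := MImp a MBot.
Definition mAnd (a b : mformula) := mNeg (MImp a (mNeg b)).
Definition mBox (a : mformula) := mNeg (MDia (mNeg a)).

Definition near_pq := mAnd (MDia (MVar 0)) (MDia (MVar 1)).
Definition tetra_formula :=
  MImp (MVar 0) (mBox (MImp (MVar 1) (MDia (mAnd near_pq (MDia near_pq))))).

Section Frame.

Variables (X : Type) (Rel : X -> X -> Prop).

Definition edges_extend_to_K4 :=
  forall x y, Rel x y ->
  exists z w, [/\ Rel z x, Rel z y, Rel w x, Rel w y & Rel z w].

Lemma msat_andI V x a b : msat Rel V x a -> msat Rel V x b -> msat Rel V x (mAnd a b).
Proof. by move=> ha hb /= /(_ ha); apply. Qed.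

Lemma K4_tetra_formula_valid :
  (forall x y, Rel x y -> Rel y x) -> edges_extend_to_K4 -> mvalid Rel tetra_formula.
Proof.
move=> symR K4 V x /= px [y [xy]]; apply => qy.
have [z [w [zx zy wx wy zw]]] := K4 x y xy.
have near_z : msat Rel V z near_pq by apply: msat_andI; [exists x | exists y].
have near_w : msat Rel V w near_pq by apply: msat_andI; [exists x | exists y].
exists z; split; first exact: symR.
by apply: (msat_andI (b := MDia near_pq) near_z); exists w.
Qed.

Lemma tetra_formula_valid_K4 x y : mvalid Rel tetra_formula -> Rel x y ->
  ~ ~ exists z w, [/\ Rel z x, Rel z y, Rel w x, Rel w y & Rel z w].
Proof.
move=> valid xy noK4.
apply: (valid (fun p u => u = if p is 0%N then x else y) x erefl).
exists y; split=> // /(_ erefl) [z [_ hz]].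
apply: hz => near_z [w [zw near_w]].
apply: near_z => -[x1 [zx ex1]] [y1 [zy ey1]].
apply: near_w => -[x2 [wx ex2]] [y2 [wy ey2]].
rewrite /= in ex1 ey1 ex2 ey2; subst x1 y1 x2 y2.
by apply: noK4; exists z, w.
Qed.

End Frame.

Section InnerProduct.

Variable n : nat.
Implicit Types a b c x y : Rn n.

Definition dot a b : RR := \sum_(i < n) a ord0 i * b ord0 i.

Lemma dotC a b : dot a b = dot b a.
Proof. by apply: eq_bigr => i _; rewrite mulrC. Qed.

Lemma dotBl a b c : dot (a - b) c = dot a c - dot b c.
Proof. by rewrite /dot -sumrB; apply: eq_bigr => i _; rewrite !mxE mulrBl. Qed.

Lemma dotBr a b c : dot c (a - b) = dot c a - dot c b.
Proof. by rewrite dotC dotBl !(dotC c). Qed.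

Lemma dotZl k a c : dot (k *: a) c = k * dot a c.
Proof. by rewrite /dot mulr_sumr; apply: eq_bigr => i _; rewrite mxE mulrA. Qed.

Lemma dotZr k a c : dot c (k *: a) = k * dot c a.
Proof. by rewrite dotC dotZl dotC. Qed.

Lemma dot_ge0 a : 0 <= dot a a.
Proof. by apply: sumr_ge0 => i _; rewrite -expr2 sqr_ge0. Qed.

Lemma dot_eq0 a : dot a a = 0 -> a = 0.
Proof.
move=> /psumr_eq0P a0; apply/rowP => i; rewrite mxE.
by apply/eqP; rewrite -[_ == 0]orbb -mulf_eq0 a0 // => j _; exact: sqr_ge0.
Qed.

Lemma euclid_distE x y : euclid_dist x y = Num.sqrt (dot (x - y) (x - y)).
Proof.
by rewrite /euclid_dist /dot; congr Num.sqrt; apply: eq_bigr => i _; rewrite !mxE expr2.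
Qed.

Lemma unit_dist_relE x y : unit_dist_rel x y <-> dot (x - y) (x - y) = 1.
Proof.
rewrite /unit_dist_rel euclid_distE; split=> [h|->]; last exact: sqrtr1.
by rewrite -(sqr_sqrtr (dot_ge0 (x - y))) h expr1n.
Qed.

Lemma euclid_distC x y : euclid_dist x y = euclid_dist y x.
Proof. by congr Num.sqrt; apply: eq_bigr => i _; rewrite -sqrrN opprB. Qed.

Lemma unit_dist_relC x y : unit_dist_rel x y -> unit_dist_rel y x.
Proof. by rewrite /unit_dist_rel euclid_distC. Qed.

(* The reflection in the hyperplane orthogonal to nv; the identity when nv = 0,
   since x / 0 = 0. *)
Definition householder (nv v : Rn n) : Rn n :=
  v - (2 * dot v nv / dot nv nv) *: nv.

Lemma householderB nv a b :
  householder nv (a - b) = householder nv a - householder nv b.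
Proof. by rewrite /householder dotBl; apply/rowP => i; rewrite !mxE; ring. Qed.

Lemma householder0 nv : householder nv 0 = 0.
Proof. by rewrite -[0 in LHS](subrr 0) householderB subrr. Qed.

Lemma dot_householder nv v : dot (householder nv v) (householder nv v) = dot v v.
Proof.
rewrite /householder !dotBl !dotBr !dotZl !dotZr (dotC nv v).
have [->|nv_neq0] := eqVneq (dot nv nv) 0; last by field.
by rewrite invr0 !mulr0 !mul0r !subr0.
Qed.

Lemma householder_swap a b : dot a a = dot b b -> householder (a - b) a = b.
Proof.
move=> ab; have [/dot_eq0 /eqP|ab_neq0] := eqVneq (dot (a - b) (a - b)) 0.
  by rewrite subr_eq0 => /eqP <-; rewrite subrr /householder scaler0 subr0.
rewrite /householder; have -> : 2 * dot a (a - b) = dot (a - b) (a - b).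
  by rewrite !dotBl !dotBr ab (dotC b a); ring.
by rewrite divff // scale1r opprB subrKC.
Qed.

Lemma unit_segment_congruence e x y : dot e e = 1 -> unit_dist_rel x y ->
  exists T : Rn n -> Rn n,
    [/\ T 0 = x, T e = y & forall a b, euclid_dist (T a) (T b) = euclid_dist a b].
Proof.
move=> e1 /unit_dist_relC /unit_dist_relE yx1.
pose H := householder (e - (y - x)); exists (fun v => x + H v); split.
- by rewrite /H householder0 addr0.
- by rewrite /H householder_swap ?e1 ?yx1 // subrKC.
- move=> a b /=; rewrite !euclid_distE [x + H a]addrC addrKA.
  by rewrite -householderB dot_householder.
Qed.

End InnerProduct.

Definition pt3 n (a b c : RR) : Rn n := \row_(i < n) nth 0 [:: a; b; c] i.

Lemma pt3B n a b c a' b' c' :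
  pt3 n a b c - pt3 n a' b' c' = pt3 n (a - a') (b - b') (c - c').
Proof.
by apply/rowP => i; rewrite !mxE; case: (val i) => [|[|[|j]]] //=; rewrite nth_nil subrr.
Qed.

Lemma pt3_0 n : pt3 n 0 0 0 = 0.
Proof.
by apply/rowP => i; rewrite !mxE; case: (val i) => [|[|[|j]]] //=; rewrite nth_nil.
Qed.

Lemma dot_pt3 k a b c a' b' c' :
  dot (pt3 k.+3 a b c) (pt3 k.+3 a' b' c') = a * a' + b * b' + c * c'.
Proof.
rewrite /dot !big_ord_recl big1 => [|i _]; last by rewrite !mxE /= nth_nil mul0r.
by rewrite !mxE /= addr0 addrA.
Qed.

Lemma unit_dist_pt3 k a b c a' b' c' :
  (a - a') ^+ 2 + (b - b') ^+ 2 + (c - c') ^+ 2 = 1 ->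
  unit_dist_rel (pt3 k.+3 a b c) (pt3 k.+3 a' b' c').
Proof. by move=> h; apply/unit_dist_relE; rewrite pt3B dot_pt3 -!expr2. Qed.

Lemma unit_edges_extend_to_K4 k : edges_extend_to_K4 (@unit_dist_rel k.+3).
Proof.
move=> x y /(unit_segment_congruence (e := pt3 k.+3 1 0 0)) [|T [T0 Te isoT]].
  by rewrite dot_pt3; ring.
have unitT a b : unit_dist_rel a b -> unit_dist_rel (T a) (T b).
  by rewrite /unit_dist_rel isoT.
pose s := Num.sqrt (3 : RR); pose t := Num.sqrt (2 / 3 : RR).
have s2 : s ^+ 2 = 3 by rewrite sqr_sqrtr // ler0n.
have t2 : t ^+ 2 = 2 / 3 by rewrite sqr_sqrtr //; lra.
exists (T (pt3 _ (1 / 2) (s / 2) 0)), (T (pt3 _ (1 / 2) (s / 6) t)).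
rewrite -T0 -Te -(pt3_0 k.+3).
by split; apply: unitT; apply: unit_dist_pt3; nra.
Qed.

Lemma plane_unit_edge_not_in_K4 :
  ~ exists z w : Rn 2,
    [/\ unit_dist_rel z 0, unit_dist_rel z (delta_mx 0 0), unit_dist_rel w 0,
        unit_dist_rel w (delta_mx 0 0) & unit_dist_rel z w].
Proof.
case=> z [w] [] /unit_dist_relE z0 /unit_dist_relE z1 /unit_dist_relE w0
  /unit_dist_relE w1 /unit_dist_relE zw.
move: z0 z1 w0 w1 zw; rewrite /dot !big_ord_recl !big_ord0 !mxE /=.
set a := z ord0 ord0; set b := z ord0 _; set c := w ord0 ord0; set d := w ord0 _.
move=> z0 z1 w0 w1 zw.
have a_half : a = 1 / 2 by nra.
have c_half : c = 1 / 2 by nra.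
(* b ^+ 2 = d ^+ 2 = 3 / 4, incompatible with b * d = 1 / 4. *)
have bd : b * d = 1 / 4 by nra.
nra.
Qed.

Theorem proposition3p12 (m : nat) (hm : (2 < m)%N) :
  ~ (forall phi : mformula, Log_eq1 m phi -> Log_eq1 2 phi).
Proof.
case: m hm => [|[|[|k]]] // _ sub.
have valid2 :=
  sub _ (K4_tetra_formula_valid (@unit_dist_relC _) (@unit_edges_extend_to_K4 k)).
apply: (tetra_formula_valid_K4 (x := 0) (y := delta_mx 0 0) valid2).
  by apply/unit_dist_relE; rewrite /dot !big_ord_recl big_ord0 !mxE /=; ring.
exact: plane_unit_edge_not_in_K4.
Qed.
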